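(* In the $L^\infty$ setting of the context with $E=\mathbb C$ (so $D=L^\infty_\mu(\Omega)$ and $A=L^\infty_\mu(\Omega)$), if $G$ acts metrically freely then for every finite $F\subset G$ and $a_g\in L^\infty_\mu(\Omega)$, $$\Big\|\sum_{g\in F}a_gT_g\Big\|=\operatorname{ess\,sup}_{x\in\Omega}\sum_{g\in F}|a_g(x)|.$$
   Context: $L^\infty$ setting: $(\Omega,\mu)$ is a measure space with $\sigma$-additive $\sigma$-finite measure $\mu$, $G$ a discrete group, $\{\alpha_g\}_{g\in G}$ a group of invertible measurable maps of $\Omega$ ($\alpha_{gh}=\alpha_g\circ\alpha_h$, $\alpha_e=\mathrm{id}$) such that $\alpha_g,\alpha_g^{-1}$ preserve $\mu$-null sets. $A=L^\infty_\mu(\Omega)$ acts on $D=L^\infty_\mu(\Omega)$ by multiplication and $(T_gf)(x)=f(\alpha_g^{-1}(x))$. $G$ acts metrically freely if for every finite $\{g_1,\dots,g_k\}\subset G$ and measurable $\Delta$ with $\mu(\Delta)>0$ there is measurable $\Delta'\subset\Delta$, $\mu(\Delta')>0$, with $\mu(\alpha_{g_i}(\Delta')\cap\alpha_{g_j}(\Delta'))=0$ for $i\neq j$. *)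

From HB Require Import structures.
From mathcomp Require Import all_boot all_order all_algebra.
From mathcomp Require Import monoid.
From mathcomp Require Import complex.
From mathcomp Require Import all_classical all_reals all_analysis.

Set Implicit Arguments.
Unset Strict Implicit.
Unset Printing Implicit Defensive.

Import Order.TTheory GRing.Theory Num.Theory.
Import numFieldNormedType.Exports.

Local Open Scope classical_set_scope.
Local Open Scope ring_scope.

Definition cabs {R : realType} (z : R[i]) : R := complex.Re `|z|.

Definition cmeasurable {d} {T : measurableType d} {R : realType}
  (f : T -> R[i]) : Prop :=
  measurable_fun setT (fun x => complex.Re (f x)) /\
  measurable_fun setT (fun x => complex.Im (f x)).

(* the L^infty norm ||f||_oo = ess sup |f| (0 when mu is the zero measure) *)
Definition Linf_norm {d} {T : measurableType d} {R : realType}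
  (mu : {measure set T -> \bar R}) (f : T -> R[i]) : \bar R :=
  Lnorm mu +oo%E (fun x => (cabs (f x))%:E).

Definition is_Linf {d} {T : measurableType d} {R : realType}
  (mu : {measure set T -> \bar R}) (f : T -> R[i]) : Prop :=
  cmeasurable f /\ (Linf_norm mu f < +oo)%E.

Definition Tg {G : groupType} {T : Type} {R : realType}
  (alpha : G -> T -> T) (g : G) (f : T -> R[i]) : T -> R[i] :=
  fun x => f (alpha (g^-1)%g x).

Definition sumOp {G : groupType} {T : Type} {R : realType}
  (alpha : G -> T -> T) (F : seq G) (a : G -> T -> R[i]) (f : T -> R[i])
  : T -> R[i] :=
  fun x => \sum_(g <- F) a g x * Tg alpha g f x.

Definition Linf_opnorm {d} {T : measurableType d} {R : realType}
  (mu : {measure set T -> \bar R}) (Op : (T -> R[i]) -> (T -> R[i]))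
  : \bar R :=
  ereal_sup [set Linf_norm mu (Op f) |
             f in [set f | is_Linf mu f /\ (Linf_norm mu f <= 1)%E]].

Definition metrically_free {d} {T : measurableType d} {R : realType}
  {G : groupType} (mu : {measure set T -> \bar R}) (alpha : G -> T -> T)
  : Prop :=
  forall (s : seq G) (D : set T), uniq s -> measurable D -> (0 < mu D)%E ->
  exists D' : set T,
    [/\ measurable D', D' `<=` D, (0 < mu D')%E &
        forall g h, g \in s -> h \in s -> g != h ->
          mu ((alpha g @` D') `&` (alpha h @` D')) = 0%E].

From HB Require Import structures.
From mathcomp Require Import all_boot all_order all_algebra.
From mathcomp Require Import monoid.
From mathcomp Require Import complex.
From mathcomp Require Import all_classical all_reals all_analysis.
From mathcomp Require Import measurable_realfun ess_sup_inf ring.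

(* Upper bound: if [|f| <= 1] a.e. then, preimages of null sets under [alpha g] being null,
   [|f \o alpha g^-1| <= 1] a.e. for every [g] in [F], and the triangle inequality gives
   [|sum_g a_g T_g f| <= sum_g |a_g|] a.e.
   Lower bound: for [r] below the essential supremum of [sum_g |a_g|], the set where
   [sum_g |a_g| > r] has positive measure. Metric freeness, applied to the inverses of the
   elements of [F], gives a subset [D] of positive measure whose translates [alpha g^-1 @` D]
   are pairwise almost disjoint. Let [f] be [conj (a_g) / |a_g| \o alpha g] on
   [alpha g^-1 @` D] and [0] elsewhere; then [|f| <= 1], and at almost every [x] in [D] only
   the [g]-th term of [sum_g a_g T_g f] sees its own phase, so the sum equals
   [sum_g |a_g x| > r] there. *)

Set Implicit Arguments.
Unset Strict Implicit.
Unset Printing Implicit Defensive.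

Import Order.TTheory GRing.Theory Num.Theory.
Import numFieldNormedType.Exports.
Local Open Scope classical_set_scope.
Local Open Scope ring_scope.

Section complex_phase.
Context {R : realType}.
Implicit Types z w : R[i].

Lemma normc_cabs z : `|z| = (cabs z)%:C%C.
Proof. by rewrite /cabs normc_def. Qed.

Lemma cabs_sqrt z :
  cabs z = Num.sqrt (complex.Re z ^+ 2 + complex.Im z ^+ 2).
Proof. by rewrite /cabs normc_def. Qed.

Lemma cabs_ge0 z : 0 <= cabs z.
Proof. by rewrite cabs_sqrt sqrtr_ge0. Qed.

Lemma ger0_cabs (t : R) : 0 <= t -> cabs t%:C%C = t.
Proof. by move=> t0; rewrite /cabs ger0_norm ?ler0c. Qed.

Lemma ler_cabs z w : (cabs z <= cabs w) = (`|z| <= `|w|).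
Proof. by rewrite !normc_cabs lecR. Qed.

Lemma cabsM z w : cabs (z * w) = cabs z * cabs w.
Proof. by apply: complexI; rewrite rmorphM -!normc_cabs normrM. Qed.

Lemma cabs_sum_le (I : Type) (s : seq I) (F : I -> R[i]) :
  cabs (\sum_(i <- s) F i) <= \sum_(i <- s) cabs (F i).
Proof.
have S0 : 0 <= \sum_(i <- s) cabs (F i) by apply: sumr_ge0 => i _; exact: cabs_ge0.
rewrite -(ger0_cabs S0) ler_cabs rmorph_sum /=.
rewrite -(eq_bigr _ (fun i _ => normc_cabs (F i))) [leRHS]ger0_norm ?ler_norm_sum //.
by apply: sumr_ge0.
Qed.

Lemma cabs_sum_norm (I : Type) (s : seq I) (F : I -> R[i]) :
  cabs (\sum_(i <- s) `|F i|) = \sum_(i <- s) cabs (F i).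
Proof.
rewrite (eq_bigr _ (fun i _ => normc_cabs (F i))) -rmorph_sum.
by rewrite ger0_cabs // sumr_ge0 // => i _; exact: cabs_ge0.
Qed.

(* Division by [0] is [0], so [conj_phase 0 = 0]. *)
Definition conj_phase z : R[i] := z^*%C / `|z|.

Lemma mul_conj_phase z : z * conj_phase z = `|z|.
Proof.
rewrite /conj_phase mulrA -sqr_normc.
by have [->|nz] := eqVneq `|z| 0; rewrite ?invr0 ?mulr0 // expr2 mulfK.
Qed.

Lemma cabs_conj_phase_le1 z : cabs (conj_phase z) <= 1.
Proof.
rewrite -(ger0_cabs ler01) ler_cabs normr1.
have [->|nz] := eqVneq z 0; first by rewrite /conj_phase normr0 invr0 mulr0 normr0.
have normJ : `|z^*%C| = `|z| by rewrite !normc_def; case: z {nz} => x y /=; rewrite sqrrN.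
rewrite /conj_phase normrM normrV ?unitfE ?normr_eq0 // normJ normr_id.
by rewrite mulfV ?normr_eq0.
Qed.

Lemma Re_conj_phase z : complex.Re (conj_phase z) = complex.Re z / cabs z.
Proof. by rewrite /conj_phase normc_cabs -fmorphV; case: z => x y /=; ring. Qed.

Lemma Im_conj_phase z : complex.Im (conj_phase z) = - complex.Im z / cabs z.
Proof. by rewrite /conj_phase normc_cabs -fmorphV; case: z => x y /=; ring. Qed.

End complex_phase.

Section complex_measurability.
Context {R : realType}.

Lemma measurable_invr : measurable_fun [set: R] (@GRing.inv R).
Proof.
rewrite (_ : GRing.inv = fun t : R => if t == 0 then 0 else t^-1); last first.
  by apply/funext => t; case: eqP => // ->; rewrite invr0.
apply: measurable_fun_if => //.
- apply: (measurable_fun_bool true); rewrite setTI.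
  rewrite (_ : _ @^-1` _ = [set 0]); first exact: measurable_set1.
  by apply/seteqP; split => t /=; case: eqP.
- rewrite setTI (_ : _ @^-1` _ = ~` [set 0]); last first.
    by apply/seteqP; split => t /=; case: eqP.
  apply: open_continuous_measurable_fun; first by rewrite openC; exact: closed_eq.
  by move=> x; rewrite inE /= => /eqP x0; apply: inv_continuous.
Qed.

Context {d} {T : measurableType d}.
Implicit Types f g : T -> R[i].

Lemma measurable_cabs f : cmeasurable f -> measurable_fun setT (fun x => cabs (f x)).
Proof.
move=> [mRe mIm]; under eq_fun do rewrite cabs_sqrt.
apply: measurableT_comp; first exact: continuous_measurable_fun (@sqrt_continuous R).
by apply: measurable_funD; exact: measurable_funX.
Qed.

Lemma measurable_sum_cabs (I : eqType) (s : seq I) (f : I -> T -> R[i]) :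
  (forall i, i \in s -> cmeasurable (f i)) ->
  measurable_fun setT (fun x => \sum_(i <- s) cabs (f i x)).
Proof.
move=> mf; under eq_fun do rewrite big_seq_cond big_mkcond /=.
apply: measurable_sum => i; case: (boolP (i \in s)) => [si|_] /=.
  exact: measurable_cabs (mf i si).
exact: measurable_cst.
Qed.

Lemma cmeasurable_cst (z : R[i]) : cmeasurable (fun _ : T => z).
Proof. by split; exact: measurable_cst. Qed.

Lemma cmeasurable_comp f (h : T -> T) : measurable_fun setT h ->
  cmeasurable f -> cmeasurable (fun x => f (h x)).
Proof.
move=> mh [mRe mIm]; split.
- exact: (measurableT_comp (f := fun x => complex.Re (f x))).
- exact: (measurableT_comp (f := fun x => complex.Im (f x))).
Qed.

Lemma cmeasurable_if (c : T -> bool) f g : measurable_fun setT c ->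
  cmeasurable f -> cmeasurable g -> cmeasurable (fun x => if c x then f x else g x).
Proof.
move=> mc [mRef mImf] [mReg mImg].
by split; [under eq_fun do rewrite (fun_if (@complex.Re R))
          |under eq_fun do rewrite (fun_if (@complex.Im R))]; exact: measurable_fun_ifT.
Qed.

Lemma cmeasurable_conj_phase f : cmeasurable f -> cmeasurable (fun x => conj_phase (f x)).
Proof.
move=> mf; have minv := measurableT_comp measurable_invr (measurable_cabs mf).
case: mf => mRe mIm; split.
- by under eq_fun do rewrite Re_conj_phase; exact: measurable_funM.
- under eq_fun do rewrite Im_conj_phase.
  by apply: measurable_funM => //; exact: measurable_funN.
Qed.

End complex_measurability.

Lemma near_all_in {T : Type} {I : eqType} (F : set_system T) {FF : Filter F}
    (s : seq I) (P : I -> T -> Prop) :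
  (forall i, i \in s -> \forall x \near F, P i x) ->
  \forall x \near F, forall i, i \in s -> P i x.
Proof.
elim: s => [|j s IHs] Ps; first exact: nearW.
apply: filterS2 (Ps j (mem_head _ _)) (IHs _) => [x Pj Ps' i|i si].
  by rewrite inE => /predU1P[->//|]; exact: Ps'.
by apply: Ps; rewrite inE si orbT.
Qed.

Section ae_Lnorm_oo.
Context {R : realType} {d} {T : measurableType d} (mu : {measure set T -> \bar R}).
Local Notation "'N_oo[ h ]" := (Lnorm mu +oo%E (fun x => (h x)%:E)).
Implicit Types h k : T -> R.

Lemma ae_notin_null N : measurable N -> mu N = 0%E -> \forall x \ae mu, ~ N x.
Proof. by move=> mN N0; exists N; split => // x /= /contrapT. Qed.

Lemma ae_comp (phi : T -> T) (P : T -> Prop) : measurable_fun setT phi ->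
  (forall N, measurable N -> mu N = 0%E -> mu (phi @^-1` N) = 0%E) ->
  (\forall x \ae mu, P x) -> \forall x \ae mu, P (phi x).
Proof.
move=> mphi phi_null [N [mN N0 PN]]; exists (phi @^-1` N); split.
- by rewrite -[_ @^-1` _]setTI; exact: mphi.
- exact: phi_null.
- by move=> x /= NPx; exact: PN.
Qed.

Lemma ae_le_Lnorm_oo h : \forall x \ae mu, (`|h x|%:E <= 'N_oo[h])%E.
Proof.
rewrite unlock; case: ifPn => [mu0|]; first exact: ess_sup_ge.
rewrite lt0e measure_ge0 andbT negbK => /eqP mu0.
exact: measure0_ae.
Qed.

Lemma le_Lnorm_oo h k : (\forall x \ae mu, `|h x| <= `|k x|) -> ('N_oo[h] <= 'N_oo[k])%E.
Proof.
move=> hk; rewrite unlock; case: ifPn => // _.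
by apply: le_ess_sup; apply: filterS hk => x; rewrite /= lee_fin.
Qed.

Lemma Lnorm_oo_le h c : 0 <= c -> (\forall x \ae mu, `|h x| <= c) -> ('N_oo[h] <= c%:E)%E.
Proof.
move=> c0 hc; rewrite unlock; case: ifPn => _; last by rewrite lee_fin.
by apply/ess_supP; apply: filterS hc => x; rewrite /= lee_fin.
Qed.

Lemma Lnorm_oo_ge h (A : set T) r : measurable A -> (0 < mu A)%E ->
  (\forall x \ae mu, A x -> r <= `|h x|) -> (r%:E <= 'N_oo[h])%E.
Proof.
move=> mA muA hA; rewrite leNgt; apply/negP => hr.
suff : \forall x \ae mu, ~ A x.
  move=> /(@negligibleS _ _ _ mu _ A (fun x Ax nAx => nAx Ax)) /(measure_negligible mA) A0.
  by rewrite A0 ltxx in muA.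
apply: filterS2 hA (ae_le_Lnorm_oo h) => x rh hN Ax.
by have := le_lt_trans hN hr; rewrite lte_fin ltNge rh.
Qed.

Lemma measurable_superlevel h r : measurable_fun setT h ->
  measurable [set x | r < `|h x|].
Proof.
move=> mh; rewrite (_ : [set x | _] = (fun x => `|h x|) @^-1` `]r, +oo[); last first.
  by apply/seteqP; split => x /=; rewrite in_itv /= andbT.
rewrite -[_ @^-1` _]setTI.
exact: (measurableT_comp (@normr_measurable R setT) mh) measurableT _ (measurable_itv _).
Qed.

Lemma Lnorm_oo_superlevel_gt0 h r : measurable_fun setT h -> 0 <= r ->
  (r%:E < 'N_oo[h])%E -> (0 < mu [set x | (r < `|h x|)%R])%E.
Proof.
move=> mh r0; apply: contraTT; rewrite lt0e measure_ge0 andbT negbK -leNgt => /eqP null.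
apply: Lnorm_oo_le => //.
by apply: filterS (ae_notin_null (measurable_superlevel r mh) null) => x /= /negP; rewrite -leNgt.
Qed.

End ae_Lnorm_oo.

Section Linf_unit_ball.
Context {R : realType} {d} {T : measurableType d} (mu : {measure set T -> \bar R}).

Lemma Linf_norm0 : Linf_norm mu (fun _ => 0 : R[i]) = 0%E.
Proof. by rewrite /Linf_norm /cabs normr0 Lnorm0. Qed.

Lemma Linf_opnorm_ge0 (Op : (T -> R[i]) -> T -> R[i]) : (0 <= Linf_opnorm mu Op)%E.
Proof.
apply: le_trans (ereal_sup_ubound _); last first.
  exists (fun _ => 0) => //.
  by split; [split; [exact: cmeasurable_cst|]|]; rewrite Linf_norm0 // ltey.
exact: Lnorm_ge0.
Qed.

End Linf_unit_ball.

Section weighted_translations.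
Context {R : realType} {d} {T : measurableType d} (mu : {measure set T -> \bar R}).
Context {G : groupType} (alpha : G -> T -> T).
Hypothesis alphaK : forall g, cancel (alpha g) (alpha g^-1%g).
Hypothesis alphaVK : forall g, cancel (alpha g^-1%g) (alpha g).
Hypothesis alpha_meas : forall g, measurable_fun setT (alpha g).
Hypothesis alpha_null : forall g N, measurable N -> mu N = 0%E ->
  mu (alpha g @^-1` N) = 0%E.
Variables (F : seq G) (a : G -> T -> R[i]).
Hypothesis a_meas : forall g, g \in F -> cmeasurable (a g).

Local Notation S := (fun x => \sum_(g <- F) cabs (a g x)).
Local Notation "'N_oo[ h ]" := (Lnorm mu +oo%E (fun x => (h x)%:E)).

Lemma cabs_sumOp_le f x : (forall g, g \in F -> cabs (Tg alpha g f x) <= 1) ->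
  cabs (sumOp alpha F a f x) <= S x.
Proof.
move=> f1; rewrite /sumOp /=; apply: le_trans (cabs_sum_le _ _) _.
rewrite big_seq [leRHS]big_seq; apply: ler_sum => g gF.
by rewrite cabsM; exact: ler_piMr (cabs_ge0 _) (f1 g gF).
Qed.

Lemma Linf_opnorm_sumOp_le : (Linf_opnorm mu (sumOp alpha F a) <= 'N_oo[S])%E.
Proof.
apply/ereal_supP => _ [f [_ f1] <-]; apply: le_Lnorm_oo.
have Tf1 : \forall x \ae mu, forall g, g \in F -> cabs (Tg alpha g f x) <= 1.
  apply: near_all_in => g _.
  apply: (ae_comp (P := fun y => cabs (f y) <= 1) (alpha_meas g^-1) (alpha_null g^-1)).
  apply: filterS (ae_le_Lnorm_oo mu (fun x => cabs (f x))) => x fx.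
  by have := le_trans fx f1; rewrite ger0_norm ?cabs_ge0 // lee_fin.
apply: filterS Tf1 => x Tf1; rewrite !ger0_norm ?cabs_ge0 ?sumr_ge0 //.
  exact: cabs_sumOp_le.
by move=> g _; exact: cabs_ge0.
Qed.

Fixpoint glued_phase (D : set T) (s : seq G) (y : T) : R[i] :=
  if s is g :: s' then
    if alpha g y \in D then conj_phase (a g (alpha g y)) else glued_phase D s' y
  else 0.

Lemma cabs_glued_phase_le1 D s y : cabs (glued_phase D s y) <= 1.
Proof.
elim: s => [|g s IHs] /=; first by rewrite /cabs normr0 ler01.
by case: ifP => // _; exact: cabs_conj_phase_le1.
Qed.

Lemma glued_phaseE D s y g : g \in s -> D (alpha g y) ->
  (forall h, h \in s -> h != g -> ~ D (alpha h y)) ->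
  glued_phase D s y = conj_phase (a g (alpha g y)).
Proof.
elim: s => [|h s IHs] //= gs Dgy only_g.
have [-> | hg] := eqVneq h g; first by rewrite (mem_set Dgy).
rewrite ifF; last by apply/negbTE/negP => /set_mem; exact: only_g (mem_head _ _) hg.
apply: IHs => // [|k ks]; first by move: gs; rewrite inE eq_sym (negbTE hg).
by apply: only_g; rewrite inE ks orbT.
Qed.

Lemma cmeasurable_glued_phase D s : measurable D -> {subset s <= F} ->
  cmeasurable (glued_phase D s).
Proof.
move=> mD; elim: s => [|g s IHs] sF /=; first exact: cmeasurable_cst.
apply: cmeasurable_if.
- apply: (measurable_fun_bool true); rewrite setTI.
  rewrite (_ : _ @^-1` _ = alpha g @^-1` D); last first.
    by apply/seteqP; split => x /=; [move=> /set_mem | move=> /mem_set].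
  by rewrite -[_ @^-1` _]setTI; exact: alpha_meas.
- by apply/cmeasurable_conj_phase/cmeasurable_comp => //; apply/a_meas/sF/mem_head.
- by apply: IHs => h hs; apply: sF; rewrite inE hs orbT.
Qed.

Lemma glued_phase_unit_ball D : measurable D ->
  is_Linf mu (glued_phase D F) /\ (Linf_norm mu (glued_phase D F) <= 1)%E.
Proof.
move=> mD; have f1 : (Linf_norm mu (glued_phase D F) <= 1)%E.
  apply: Lnorm_oo_le => //; apply: aeW => x.
  by rewrite ger0_norm ?cabs_ge0 //; exact: cabs_glued_phase_le1.
split=> //; split; last exact: le_lt_trans f1 (ltey _).
exact: cmeasurable_glued_phase.
Qed.

Lemma image_alphaV g (D : set T) : alpha g^-1%g @` D = alpha g @^-1` D.
Proof.
apply/seteqP; split => [_ [y Dy <-]|x Dgx] /=; first by rewrite alphaVK.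
by exists (alpha g x); rewrite ?alphaK.
Qed.

Lemma sumOp_glued_phase D x : D x ->
  (forall g, g \in F -> forall h, h \in F -> h != g -> ~ D (alpha h (alpha g^-1%g x))) ->
  cabs (sumOp alpha F a (glued_phase D F) x) = S x.
Proof.
move=> Dx sep; rewrite /sumOp /Tg -cabs_sum_norm; congr cabs.
rewrite big_seq [RHS]big_seq; apply: eq_bigr => g gF.
by rewrite (@glued_phaseE _ _ _ g) ?alphaVK ?mul_conj_phase // => h hF; exact: sep.
Qed.

Lemma ae_separated D : measurable D ->
  (forall g h, g \in F -> h \in F -> g != h ->
     mu (alpha g^-1%g @` D `&` alpha h^-1%g @` D) = 0%E) ->
  \forall x \ae mu, forall g, g \in F -> forall h, h \in F -> h != g ->
    D x -> ~ D (alpha h (alpha g^-1%g x)).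
Proof.
move=> mD disj; apply: near_all_in => g gF; apply: near_all_in => h hF.
have [->|hg] := eqVneq h g; first exact: aeW.
have mI : measurable (alpha g^-1%g @` D `&` alpha h^-1%g @` D).
  by rewrite !image_alphaV; apply: measurableI; rewrite -[_ @^-1` _]setTI; exact: alpha_meas.
have gh : g != h by rewrite eq_sym.
have notI := ae_notin_null mI (disj _ _ gF hF gh).
apply: filterS (ae_comp (alpha_meas g^-1) (alpha_null g^-1) notI) => x notIx _ Dx Dhx.
by apply: notIx; rewrite !image_alphaV /= alphaVK.
Qed.

Lemma Linf_opnorm_sumOp_ge r : metrically_free mu alpha -> uniq F ->
  (r%:E < 'N_oo[S])%E -> (r%:E <= Linf_opnorm mu (sumOp alpha F a))%E.
Proof.
move=> free F_uniq rS; have [r_lt0|r_ge0] := ltP r 0.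
  by apply: le_trans (Linf_opnorm_ge0 _ _); rewrite lee_fin ltW.
have mS := measurable_sum_cabs a_meas.
have invF_uniq : uniq (map (fun g => g^-1)%g F) by rewrite map_inj_uniq //; exact: invg_inj.
have [D [mD DS D_gt0 disj]] := free _ _ invF_uniq (measurable_superlevel r mS)
  (Lnorm_oo_superlevel_gt0 mS r_ge0 rS).
have [f_Linf f1] := glued_phase_unit_ball mD.
apply: le_trans (ereal_sup_ubound _); last by exists (glued_phase D F).
apply: (Lnorm_oo_ge mD D_gt0); apply: filterS (ae_separated mD _) => [x sep Dx|].
  rewrite sumOp_glued_phase //; first exact/ltW/DS.
  by move=> g gF h hF hg; exact: sep.
move=> g h gF hF gh; apply: disj; rewrite ?map_f //.
by apply: contra gh => /eqP/invg_inj ->.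
Qed.

End weighted_translations.

Lemma lee_ltEFin {R : realType} (x y : \bar R) :
  (forall r : R, (r%:E < x)%E -> (r%:E <= y)%E) -> (x <= y)%E.
Proof.
case: x => [x| |] xy; last by rewrite leNye.
- apply/lee_subgt0Pr => e e0; rewrite -EFinB; apply: xy.
  by rewrite lte_fin gtrBl.
- by rewrite (eq_infty (fun r => xy r (ltry r))) lexx.
Qed.

Theorem mainTheorem8 (R : realType) (d : measure_display) (Omega : measurableType d)
  (mu : {measure set Omega -> \bar R}) (G : groupType) (alpha : G -> Omega -> Omega)
  (mu_sfin : sigma_finite setT mu)
  (alpha_mul : forall g h : G, alpha (g * h)%g = alpha g \o alpha h)
  (alpha_one : alpha 1%g = id)
  (alpha_meas : forall g : G, measurable_fun setT (alpha g))
  (alpha_null : forall (g : G) (N : set Omega), measurable N -> mu N = 0%E ->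
      mu (alpha g @` N) = 0%E /\ mu (alpha g @^-1` N) = 0%E)
  (free : metrically_free mu alpha)
  (F : seq G) (F_uniq : uniq F) (a : G -> Omega -> R[i])
  (a_Linf : forall g : G, g \in F -> is_Linf mu (a g)) :
  Linf_opnorm mu (sumOp alpha F a) =
  Lnorm mu +oo%E (fun x => (\sum_(g <- F) cabs (a g x))%:E).
Proof.
have alphaK g : cancel (alpha g) (alpha g^-1%g).
  by move=> x; rewrite -[LHS]/((alpha g^-1%g \o alpha g) x) -alpha_mul mulVg alpha_one.
have alphaVK g : cancel (alpha g^-1%g) (alpha g).
  by move=> x; rewrite -[LHS]/((alpha g \o alpha g^-1%g) x) -alpha_mul mulgV alpha_one.
have null_preimage g N mN N0 := (alpha_null g N mN N0).2.
have a_meas g gF := (a_Linf g gF).1.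
apply/le_anti/andP; split; first exact: (Linf_opnorm_sumOp_le alpha_meas null_preimage).
apply: lee_ltEFin => r.
exact: (Linf_opnorm_sumOp_ge alphaK alphaVK alpha_meas null_preimage a_meas free F_uniq).
Qed.
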